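(* Every $N$-affine equivariant additive integrator map $\phi$ is affine functionally equivariant: for all Banach spaces $Y,Z$, every affine map $F\colon Y\to Z$, and all $f^{[1]},\ldots,f^{[N]}\in\mathfrak X(Y)$, with $g^{[\nu]}(y,z)=\bigl(f^{[\nu]}(y),F'(y)f^{[\nu]}(y)\bigr)$, one has $\phi(f^{[1]},\ldots,f^{[N]})\sim_{(\mathrm{id},F)}\phi(g^{[1]},\ldots,g^{[N]})$.
   Context: All spaces are real Banach spaces; $\mathfrak X(Y)$ denotes smooth vector fields on $Y$. For fixed $N\in\mathbb N$, an additive integrator map $\phi$ is a collection of smooth maps $\phi_Y\colon\mathfrak X(Y)^N\to\mathfrak X(Y)$, one per Banach space $Y$. For Gâteaux differentiable $\chi\colon Y\to U$, $f\sim_\chi g$ means $\chi'(y)f(y)=g(\chi(y))$ for all $y$; $(\mathrm{id},F)(y)=(y,F(y))$. $\phi$ is $N$-affine equivariant if for every affine map $A$ between Banach spaces, $f^{[\nu]}\sim_A g^{[\nu]}$ for all $\nu$ implies $\phi(f^{[1]},\ldots,f^{[N]})\sim_A\phi(g^{[1]},\ldots,g^{[N]})$. *)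

From HB Require Import structures.
From mathcomp Require Import all_boot all_order all_algebra.
From mathcomp Require Import all_classical all_reals all_analysis.
Set Implicit Arguments. Unset Strict Implicit. Unset Printing Implicit Defensive.
Import Order.TTheory GRing.Theory Num.Theory.
Import numFieldNormedType.Exports.

(* The product of two Banach spaces (with the max norm provided by the library)
   is again a Banach space: the library lacks this completeness instance. *)
Local Open Scope classical_set_scope.
Section ProdComplete. Variable R : realType. Variables U V : completeNormedModType R.
Lemma cauchy_fst (F : set_system (U * V)) : Filter F -> cauchy F -> cauchy (fst @ F).
Proof.
move=> FF cF A entA.
have /cF [[P Q] /= [FP FQ] PQ] := prod_entP entA (@entourageT V).
exists (fst @` P, fst @` Q) => /=.
  by split; [apply: filterS FP|apply: filterS FQ] => x Px; exists x.
move=> [a b] /= [[[a' b'] Pa <-] [[a'' b''] Qb <-]] /=.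
by have [] := PQ ((a',b'),(a'',b'')) (conj Pa Qb).
Qed.
Lemma cauchy_snd (F : set_system (U * V)) : Filter F -> cauchy F -> cauchy (snd @ F).
Proof.
move=> FF cF A entA.
have /cF [[P Q] /= [FP FQ] PQ] := prod_entP (@entourageT U) entA.
exists (snd @` P, snd @` Q) => /=.
  by split; [apply: filterS FP|apply: filterS FQ] => x Px; exists x.
move=> [a b] /= [[[a' b'] Pa <-] [[a'' b''] Qb <-]] /=.
by have [] := PQ ((a',b'),(a'',b'')) (conj Pa Qb).
Qed.
Lemma prod_complete (F : set_system ((U * V)%type : normedModType R)) : ProperFilter F -> cauchy F -> cvg F.
Proof.
move=> PF cF.
have c1 : [cvg (fst @ F) in U] by apply: cauchy_cvg; exact: cauchy_fst.
have c2 : [cvg (snd @ F) in V] by apply: cauchy_cvg; exact: cauchy_snd.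
apply/cvg_ex; exists (lim (fst @ F), lim (snd @ F)).
have := @cvg_pair _ _ _ F _ _ _ _ _ fst snd c1 c2.
move=> H A /= NA.
have := H ltac:(typeclasses eauto) ltac:(typeclasses eauto) ltac:(typeclasses eauto) A NA.
rewrite /fmap /=.
rewrite !nbhs_filterE. apply: (filterS (P := fun x => A (x.1, x.2))) => //. by case.
Qed.
HB.instance Definition _ := Uniform_isComplete.Build (U * V)%type prod_complete.
End ProdComplete.

Local Open Scope ring_scope.

Fixpoint iderive {R : realType} {V W : normedModType R} (f : V -> W)
    (vs : seq V) : V -> W :=
  if vs is v :: vs' then fun x => 'D_v (iderive f vs') x else f.

(* C^infinity in the Michal--Bastiani sense (on Banach spaces this coincides
   with Frechet C^infinity): all iterated directional derivatives exist and
   (x, v1, ..., vk) |-> d^k f(x)(v1,...,vk) is jointly continuous. *)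
Definition smooth {R : realType} {V W : normedModType R} (f : V -> W) : Prop :=
  forall k : nat,
    (forall (vs : seq V) (x v : V), size vs = k -> derivable (iderive f vs) x v)
    /\
    (forall (vs0 : seq V) (x0 : V), size vs0 = k ->
       forall e : R, 0 < e -> exists2 d : R, 0 < d &
         forall (vs : seq V) (x : V), size vs = k ->
           `|x - x0| < d -> (forall i, (i < k)%N -> `|nth 0 vs i - nth 0 vs0 i| < d) ->
           `|iderive f vs x - iderive f vs0 x0| < e).

Definition VF {R : realType} (Y : normedModType R) : Type :=
  {f : Y -> Y | smooth f}.
Definition VF_fun {R : realType} {Y : normedModType R} (f : VF Y) : Y -> Y :=
  proj1_sig f.
Coercion VF_fun : VF >-> Funclass.

Definition related {R : realType} {Y U : normedModType R} (chi : Y -> U)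
    (f : Y -> Y) (g : U -> U) : Prop :=
  forall y, 'D_(f y) chi y = g (chi y).

Definition affine {R : realType} {Y U : normedModType R} (A : Y -> U) : Prop :=
  exists L : Y -> U,
    (forall (a : R) (x y : Y), L (a *: x + y) = a *: L x + L y) /\
    continuous L /\ exists b : U, forall y, A y = L y + b.

Definition integrator_map (R : realType) (N : nat) : Type :=
  forall Y : completeNormedModType R, ('I_N -> VF Y) -> VF Y.

(* smoothness of phi_Y (convenient-calculus sense: smooth families of
   vector fields, i.e. (t,y) |-> f_t(y) jointly smooth, are mapped to smooth
   families) *)
Definition integrator_smooth {R : realType} {N : nat} (phi : integrator_map R N) : Prop :=
  forall (Y : completeNormedModType R) (c : R -> 'I_N -> VF Y),
    (forall nu, smooth (fun p : R * Y => c p.1 nu p.2)) ->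
    smooth (fun p : R * Y => phi Y (c p.1) p.2).

Definition affine_equivariant {R : realType} {N : nat} (phi : integrator_map R N) : Prop :=
  forall (Y U : completeNormedModType R) (A : Y -> U), affine A ->
    forall (f : 'I_N -> VF Y) (g : 'I_N -> VF U),
      (forall nu, related A (f nu) (g nu)) ->
      related A (phi Y f) (phi U g).

(* The graph map y |-> (y, F y) of an affine F is itself affine, and its Gateaux
   derivative at y sends v to (v, F'(y) v). Hence the fields f^[nu] are
   (id, F)-related to the fields g^[nu], and affine equivariance of phi
   transports this relation to phi(f) and phi(g). *)
From HB Require Import structures.
From mathcomp Require Import all_boot all_order all_algebra.
From mathcomp Require Import all_classical all_reals all_analysis.
Import Order.TTheory GRing.Theory Num.Theory.
Import numFieldNormedType.Exports.
Set Implicit Arguments.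
Unset Strict Implicit.
Local Open Scope ring_scope.

Section AffineDerivative.
Local Open Scope classical_set_scope.
Variables (R : realType) (Y U : normedModType R) (A L : Y -> U) (b : U).
Hypothesis L_linear : forall (a : R) (x y : Y), L (a *: x + y) = a *: L x + L y.
Hypothesis A_affine : forall y, A y = L y + b.

Lemma derive_affine (v y : Y) : 'D_v A y = L v.
Proof.
suff : (fun h : R => h^-1 *: ((A \o shift y) (h *: v) - A y)) @ 0^' --> L v.
  exact: cvg_lim.
apply: cvg_near_cst; near=> h.
have h_neq0 : h != 0 by near: h; exact: nbhs_dnbhs_neq.
rewrite /= /shift !A_affine L_linear -[h *: L v + L y + b]addrA addrK.
by rewrite scalerA mulVf // scale1r.
Unshelve. all: by end_near.
Qed.

End AffineDerivative.

Section AffineGraph.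
Variables (R : realType) (Y Z : normedModType R) (F L : Y -> Z) (b : Z).
Hypothesis L_linear : forall (a : R) (x y : Y), L (a *: x + y) = a *: L x + L y.
Hypothesis F_affine : forall y, F y = L y + b.

Let graphL (y : Y) : Y * Z := (y, L y).

Let graphL_linear (a : R) (x y : Y) : graphL (a *: x + y) = a *: graphL x + graphL y.
Proof. by rewrite /graphL L_linear. Qed.

Let graph_affine (y : Y) : (y, F y) = graphL y + (0, b).
Proof. by rewrite /graphL F_affine; congr pair; rewrite /= addr0. Qed.

Lemma affine_graph : continuous L -> affine (fun y : Y => (y, F y)).
Proof.
move=> L_cont; exists graphL; split => //; split; last by exists (0, b).
by move=> y; apply: cvg_pair; [exact: cvg_id | exact: L_cont].
Qed.

Lemma derive_graph (v y : Y) : 'D_v (fun y : Y => (y, F y)) y = (v, 'D_v F y).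
Proof.
by rewrite (derive_affine graphL_linear graph_affine) (derive_affine L_linear F_affine).
Qed.

End AffineGraph.

Theorem proposition4p5 (R : realType) (N : nat) (phi : integrator_map R N) :
  integrator_smooth phi -> affine_equivariant phi ->
  forall (Y Z : completeNormedModType R) (F : Y -> Z), affine F ->
  forall (f : 'I_N -> VF Y) (g : 'I_N -> VF (Y * Z)%type),
    (forall nu (y : Y) (z : Z), g nu (y, z) = (f nu y, 'D_(f nu y) F y)) ->
    related (fun y : Y => (y, F y)) (phi Y f) (phi (Y * Z)%type g).
Proof.
move=> _ phi_equivariant Y Z F [L [L_linear [L_cont [b F_affine]]]] f g gE.
apply: phi_equivariant; first exact: affine_graph L_linear F_affine L_cont.
by move=> nu y; rewrite (derive_graph L_linear F_affine) gE.
Qed.
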